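(* Let $v\in\Delta$ be an equilibrium, i.e. $F(v)=0$. Then for $i,j\in\mathrm{supp}(v)$, $$D_{e_i-e_j}F(v)=(\alpha-1)(e_i-e_j)+\alpha\sum_{\ell}\frac{v_\ell^\alpha\big(A_{\ell,i}v_i^{\alpha-1}-A_{\ell,j}v_j^{\alpha-1}\big)}{H(v)}\,e_\ell,$$ and for $i\notin\mathrm{supp}(v)$, $$D_{e_i-v}F(v)=-(e_i-v).$$ Furthermore, all eigenvalues of $DF(v)$ are real.
   Context: Let $N\ge2$, $\alpha>1$, and let $A=(A_{i,j})_{i,j\le N}$ be a symmetric matrix with nonnegative entries, $A_{i,j}>0$ for $i\ne j$, and $\sum_j A_{i,j}$ independent of $i$. Let $(e_1,\dots,e_N)$ be the canonical basis of $\mathbb R^N$. Let $\Delta=\{v\in\mathbb R_+^N:\ \sum_i v_i=1,\ v_i\le 3/4 \text{ whenever } A_{i,i}=0\}$. For $v$ with nonnegative coordinates let $v^\alpha=(v_i^\alpha)_i$, $H(v)=\sum_{i,j}A_{i,j}v_i^\alpha v_j^\alpha$ and $\pi_i(v)=v_i^\alpha(Av^\alpha)_i/H(v)$; on $\Delta$ the vector field is $F(v)=-v+\pi(v)$, and $DF(v)$ (resp. $D_xF(v)$) denotes the differential (resp. directional derivative in direction $x$) at $v$ of the map $v\mapsto -v+\pi(v)$, viewed as a linear map of $T_0\Delta=\{x\in\mathbb R^N:\sum_ix_i=0\}$. $\mathrm{supp}(v)=\{i: v_i\neq0\}$. *)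

From HB Require Import structures.
From mathcomp Require Import all_boot all_order all_algebra.
From mathcomp Require Import all_classical all_reals all_analysis.
From mathcomp Require Import complex.
Set Implicit Arguments. Unset Strict Implicit. Unset Printing Implicit Defensive.
Import Order.TTheory GRing.Theory Num.Theory.
Import numFieldNormedType.Exports.
Local Open Scope ring_scope.

Section Defs.
Variables (R : realType) (N : nat).

(* v_i^alpha, extended to all of R as |x|^alpha (agrees with x^alpha for x >= 0) *)
Definition apow (alpha x : R) : R := `|x| `^ alpha.

Definition ebase (i : 'I_N) : 'rV[R]_N := delta_mx 0 i.

Definition Hfun (A : 'M[R]_N) (alpha : R) (v : 'rV[R]_N) : R :=
  \sum_(i < N) \sum_(j < N) A i j * apow alpha (v 0 i) * apow alpha (v 0 j).

Definition pifun (A : 'M[R]_N) (alpha : R) (v : 'rV[R]_N) : 'rV[R]_N :=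
  \row_(i < N) (apow alpha (v 0 i) * (\sum_(j < N) A i j * apow alpha (v 0 j))
                / Hfun A alpha v).

Definition Ffun (A : 'M[R]_N) (alpha : R) (v : 'rV[R]_N) : 'rV[R]_N :=
  - v + pifun A alpha v.

Definition inDelta (A : 'M[R]_N) (v : 'rV[R]_N) : Prop :=
  [/\ forall i, 0 <= v 0 i,
      \sum_(i < N) v 0 i = 1 &
      forall i, A i i = 0 -> v 0 i <= 3 / 4].

(* matrix of a linear map f on row vectors: x *m linmx f = f x *)
Definition linmx (f : 'rV[R]_N -> 'rV[R]_N) : 'M[R]_N :=
  \matrix_(l < N, k < N) f (ebase l) 0 k.

(* eigenvalues (over C) of the linear map x |-> x *m M restricted to the
   invariant subspace T_0 = {x | sum_i x_i = 0} *)
Definition eigenvalue_T0 (M : 'M[R]_N) (lam : R[i]) : Prop :=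
  exists z : 'rV[R[i]]_N,
    [/\ z != 0, \sum_(k < N) z 0 k = 0 &
        z *m map_mx (real_complex R) M = lam *: z].

End Defs.

(* At an equilibrium [v] of [F = -id + pi], the identity [pi v = v] reads
   [v_l^alpha (A v^alpha)_l = v_l H(v)]; hence [q_l (A v^alpha)_l = H(v)] on
   [supp v], where [q_l = v_l^(alpha-1)].  As [alpha > 1], [t |-> |t|^alpha] is
   differentiable at every [t >= 0] with derivative [alpha t^(alpha-1)], so [F] is
   differentiable at [v]; differentiating coordinatewise and simplifying with the
   identity above gives, with [s(x)] the sum of the coordinates of [x] on [supp v],
     [dF(x)_l = (alpha [v_l != 0] - 1) x_l
                + alpha (v_l^alpha (A (q x))_l / H(v) - 2 v_l s(x))],
   from which both directional derivatives are read off.  This [dF] is [-id] on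
   the coordinates off the support, and on the support it is self-adjoint for
   [<x, y> = sum_k x_k y_k / v_k] because [A] is symmetric.  Thus [dF] is
   self-adjoint for a positive definite inner product, and a complex eigenvalue
   [r + i s] with eigenvector [a + i b] gives [s (<a, a> + <b, b>) = 0]. *)

From HB Require Import structures.
From mathcomp Require Import all_boot all_order all_algebra.
From mathcomp Require Import all_classical all_reals all_analysis.
From mathcomp Require Import complex.
From mathcomp Require Import ring.
Import Order.TTheory GRing.Theory Num.Theory.
Import numFieldNormedType.Exports.

Set Implicit Arguments.
Unset Strict Implicit.
Unset Printing Implicit Defensive.

Local Open Scope classical_set_scope.
Local Open Scope ring_scope.

Section pointwise_differentials.
Variables (R : realType) (V : normedModType R) (u : V).

Lemma is_diff_sum (W : normedModType R) n (f df : 'I_n -> V -> W) :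
  (forall i, is_diff u (f i) (df i)) ->
  is_diff u (fun w => \sum_(i < n) f i w) (fun x => \sum_(i < n) df i x).
Proof.
move=> hf; have := big_ind2 (fun F dF : V -> W => is_diff u F dF)
  (is_diff_cst 0 u) (fun F dF G dG => @is_diffD _ _ _ F G dF dG u) (P := xpredT)
  (fun i _ => hf i) (r := index_enum 'I_n).
by rewrite !fct_sumE.
Qed.

Lemma is_diffM_fun (f g df dg : V -> R) : is_diff u f df -> is_diff u g dg ->
  is_diff u (fun w => f w * g w) (fun x => f u * dg x + g u * df x).
Proof. by move=> hf hg; apply: (is_diff_eq (is_diffM hf hg)). Qed.

Lemma is_diffV_fun (f df : V -> R) : is_diff u f df -> f u != 0 ->
  is_diff u (fun w => (f w)^-1) (fun x => - (f u) ^- 2 * df x).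
Proof.
move=> hf fu; apply: DiffDef; first exact: differentiableV.
by rewrite diffV // diff_val.
Qed.

Lemma is_diff_comp_derive (f df : V -> R) (g : R -> R) (g' : R) :
  is_diff u f df -> is_derive (f u) 1 g g' ->
  is_diff u (fun w => g (f w)) (fun x => df x * g').
Proof.
move=> hf hg; have /derivable1_diffP dg := @ex_derive _ _ _ _ _ _ _ hg.
apply: DiffDef; first exact: differentiable_comp.
by rewrite diff_comp // (diff1E dg) diff_val derive1E derive_val.
Qed.

Lemma is_diff_row n (f : V -> 'rV[R]_n) (df : 'I_n -> V -> R) :
  (forall k, is_diff u (fun w => f w 0 k) (df k)) ->
  is_diff u f (fun x => \row_k df k x).
Proof.
move=> hf; have hk k : is_diff u (fun w => f w 0 k *: (delta_mx 0 k : 'rV_n))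
    (fun x => df k x *: delta_mx 0 k).
  apply: DiffDef; first exact: differentiableZl.
  by rewrite diffZl // diff_val.
have := is_diff_sum hk.
have -> : (fun w => \sum_(k < n) f w 0 k *: (delta_mx 0 k : 'rV_n)) = f.
  by apply: funext => w; rewrite -row_sum_delta.
move/is_diff_eq; apply; apply: funext => x.
by rewrite [RHS]row_sum_delta; under [RHS]eq_bigr do rewrite mxE.
Qed.

End pointwise_differentials.

Lemma is_diff_coord (R : realType) n (u : 'rV[R]_n) (k : 'I_n) :
  is_diff u (fun w : 'rV[R]_n => w 0 k) (fun x => x 0 k).
Proof.
have lin : linear (fun w : 'rV[R]_n => w 0 k) by move=> a x y; rewrite !mxE.
pose fL : {linear 'rV[R]_n -> R} := HB.pack (fun w : 'rV[R]_n => w 0 k)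
  (GRing.isLinear.Build _ _ _ _ _ lin).
have cf : continuous fL by exact: coord_continuous.
apply: DiffDef; first exact: (linear_differentiable u cf).
exact: (diff_lin u cf).
Qed.

Section apow_derivative.
Variables (R : realType) (a : R).
Hypothesis a_gt1 : 1 < a.

Let a_gt0 : 0 < a. Proof. exact: lt_trans ltr01 a_gt1. Qed.

(* The difference quotient at [0] has norm [|h|^(a-1)], which tends to [0]
   because [a > 1]. *)
Lemma is_derive_apow0 : is_derive (0 : R) 1 (apow a) 0.
Proof.
have a1_gt0 : 0 < a - 1 by rewrite subr_gt0.
have quot0 : (fun h : R => h^-1 *: ((apow a \o shift 0) (h *: 1) - apow a 0))
    @ 0^' --> (0 : R).
  apply/cvgr0Pnorm_lt => e e_gt0.
  have d_gt0 : 0 < e `^ (a - 1)^-1 by rewrite powR_gt0.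
  near=> h.
  have h_neq0 : h != 0 by near: h; exact: nbhs_dnbhs_neq.
  have h_small : `|h| < e `^ (a - 1)^-1 by near: h; exact: dnbhs0_lt.
  rewrite /= /apow addr0 normr0 powR0 ?gt_eqF // subr0 [_ *: 1]mulr1.
  rewrite -mulr_powRB1 ?normr_ge0 // normrZ normrM normfV normr_id.
  rewrite (ger0_norm (powR_ge0 _ _)) mulKf ?normr_eq0 //.
  have := gt0_ltr_powR a1_gt0 _ _ h_small.
  rewrite -powRrM mulVf ?gt_eqF // powRr1 ?(ltW e_gt0) //; apply.
    by rewrite qualifE /= normr_ge0.
  by rewrite qualifE /= ltW.
apply: DeriveDef; last exact: cvg_lim quot0.
by apply/cvg_ex; exists 0.
Unshelve. all: by end_near. Qed.

Lemma is_derive_apow (t : R) : 0 <= t -> is_derive t 1 (apow a) (a * t `^ (a - 1)).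
Proof.
rewrite le_eqVlt => /predU1P[<-|t_gt0].
  by rewrite powR0 ?mulr0 ?subr_eq0 ?gt_eqF //; exact: is_derive_apow0.
apply: near_eq_is_derive (is_derive1_powR a t_gt0).
near=> s; rewrite /apow ger0_norm //; apply: ltW; near: s; exact: lt_nbhsr.
Unshelve. all: by end_near. Qed.

End apow_derivative.

Section real_matrices.
Variable R : realType.

Lemma mul_rV_linmx n (f : {linear 'rV[R]_n -> 'rV[R]_n}) (x : 'rV[R]_n) :
  x *m linmx f = f x.
Proof.
apply/rowP => k; rewrite mxE {2}(row_sum_delta x) linear_sum summxE.
by apply: eq_bigr => m _; rewrite linearZ !mxE.
Qed.

Lemma sum_mulmx_sym n (A : 'M[R]_n) (x y : 'I_n -> R) : A^T = A ->
  \sum_(k < n) x k * \sum_(j < n) A k j * y j =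
  \sum_(j < n) y j * \sum_(k < n) A j k * x k.
Proof.
move=> A_sym; under eq_bigr do rewrite mulr_sumr.
under [RHS]eq_bigr do rewrite mulr_sumr.
rewrite exchange_big /=; apply: eq_bigr => j _; apply: eq_bigr => k _.
by rewrite -[in RHS]A_sym mxE; ring.
Qed.

Lemma ebaseE n (i k : 'I_n) : ebase R i 0 k = (k == i)%:R.
Proof. by rewrite mxE eqxx eq_sym. Qed.

Lemma sum_scale_ebase n (c : 'I_n -> R) : \sum_(l < n) c l *: ebase R l = \row_l c l.
Proof. by rewrite [RHS]row_sum_delta; apply: eq_bigr => l _; rewrite mxE. Qed.

Lemma sum_mul_ebase n (c : 'I_n -> R) i : \sum_(k < n) c k * ebase R i 0 k = c i.
Proof.
rewrite (bigD1 i) //= ebaseE eqxx mulr1 big1 ?addr0 // => k ki.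
by rewrite ebaseE (negbTE ki) mulr0.
Qed.

Lemma Re_sum n (F : 'I_n -> R[i]) :
  complex.Re (\sum_(m < n) F m) = \sum_(m < n) complex.Re (F m).
Proof. by elim/big_rec2: _ => // m x y _ <-; case: (F m) => ? ?; case: y. Qed.

Lemma Im_sum n (F : 'I_n -> R[i]) :
  complex.Im (\sum_(m < n) F m) = \sum_(m < n) complex.Im (F m).
Proof. by elim/big_rec2: _ => // m x y _ <-; case: (F m) => ? ?; case: y. Qed.

Lemma eigenvector_ReIm n (M : 'M[R]_n) (z : 'rV[R[i]]_n) (lam : R[i]) :
  z *m map_mx (real_complex R) M = lam *: z ->
  let: a := map_mx (@complex.Re R) z in let: b := map_mx (@complex.Im R) z in
  a *m M = complex.Re lam *: a - complex.Im lam *: b /\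
  b *m M = complex.Im lam *: a + complex.Re lam *: b.
Proof.
move=> zM; split; apply/rowP => k; rewrite !mxE.
- have := congr1 (fun y : 'rV_n => complex.Re (y 0 k)) zM.
  rewrite /= !mxE Re_sum => zMk.
  transitivity (complex.Re (lam * z 0 k)); last by case: (lam) (z 0 k) => ? ? [].
  rewrite -zMk; apply: eq_bigr => m _.
  by rewrite !mxE; case: (z 0 m) => ? ? /=; ring.
- have := congr1 (fun y : 'rV_n => complex.Im (y 0 k)) zM.
  rewrite /= !mxE Im_sum => zMk.
  transitivity (complex.Im (lam * z 0 k)).
    by rewrite -zMk; apply: eq_bigr => m _; rewrite !mxE; case: (z 0 m) => ? ? /=; ring.
  by case: (lam) (z 0 k) => ? ? [] /= ? ?; ring.
Qed.

Lemma ReIm_neq0 n (z : 'rV[R[i]]_n) : z != 0 ->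
  exists k, (complex.Re (z 0 k) != 0) || (complex.Im (z 0 k) != 0).
Proof.
move=> z_neq0; case: (pickP (fun k => z 0 k != 0)) => [k zk | z0].
  exists k; move: zk; case: (z 0 k) => x y /=; apply: contraR.
  by rewrite negb_or !negbK => /andP[/eqP -> /eqP ->].
by case/eqP: z_neq0; apply/rowP => k; rewrite mxE; apply/eqP; rewrite -[_ == _]negbK z0.
Qed.

(* The hypothesis is [<a, T b> = <b, T a>] for the [w]-weighted inner product,
   where [T (a + i b) = (r + i s) (a + i b)]. *)
Lemma selfadjoint_rotation_eq0 n (w a b : 'I_n -> R) (r s : R) :
  (forall k, 0 < w k) -> (exists k, (a k != 0) || (b k != 0)) ->
  \sum_k w k * a k * (s * a k + r * b k) = \sum_k w k * b k * (r * a k - s * b k) ->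
  s = 0.
Proof.
move=> w_gt0 [k ab_k] sym.
have : s * \sum_m w m * (a m ^+ 2 + b m ^+ 2) = 0.
  rewrite mulr_sumr -[RHS](subrr (\sum_m w m * b m * (r * a m - s * b m))).
  by rewrite -{1}sym -sumrB; apply: eq_bigr => m _; ring.
move/eqP; rewrite mulf_eq0 => /orP[/eqP // | /eqP norm0].
have sqr_gt0 m : (a m != 0) || (b m != 0) -> 0 < a m ^+ 2 + b m ^+ 2.
  move=> abm; rewrite lt_def paddr_eq0 ?sqr_ge0 // !sqrf_eq0 negb_and abm.
  by rewrite /= addr_ge0 ?sqr_ge0.
suff : 0 < \sum_m w m * (a m ^+ 2 + b m ^+ 2) by rewrite norm0 ltxx.
rewrite (bigD1 k) //= ltr_pwDl ?mulr_gt0 ?sqr_gt0 //.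
by apply: sumr_ge0 => m _; rewrite mulr_ge0 ?(ltW (w_gt0 m)) ?addr_ge0 ?sqr_ge0.
Qed.

End real_matrices.

Definition Apow (R : realType) N (A : 'M[R]_N) (alpha : R) (w : 'rV[R]_N)
    (l : 'I_N) :=
  \sum_(j < N) A l j * apow alpha (w 0 j).

Lemma FfunE (R : realType) N (A : 'M[R]_N) alpha w l :
  Ffun A alpha w 0 l =
  - w 0 l + apow alpha (w 0 l) * Apow A alpha w l / Hfun A alpha w.
Proof. by rewrite !mxE. Qed.

Lemma HfunE (R : realType) N (A : 'M[R]_N) alpha w :
  Hfun A alpha w = \sum_(k < N) apow alpha (w 0 k) * Apow A alpha w k.
Proof.
apply: eq_bigr => k _; rewrite mulr_sumr.
by apply: eq_bigr => j _; rewrite mulrCA mulrA.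
Qed.

Section equilibrium.
Variables (R : realType) (N : nat) (alpha : R) (A : 'M[R]_N) (v : 'rV[R]_N).
Hypotheses (alpha_gt1 : 1 < alpha) (A_sym : A^T = A).
Hypotheses (v_ge0 : forall k, 0 <= v 0 k) (v_sum1 : \sum_(k < N) v 0 k = 1).
Hypothesis v_eq : Ffun A alpha v = 0.

Let H := Hfun A alpha v.
Let p k := v 0 k `^ alpha.
Let q k := v 0 k `^ (alpha - 1).
Let U (x : 'rV[R]_N) l := \sum_(j < N) A l j * (q j * x 0 j).
Let supp_sum (x : 'rV[R]_N) := \sum_(k < N) (v 0 k != 0)%:R * x 0 k.

Let alpha_gt0 : 0 < alpha. Proof. exact: lt_trans ltr01 alpha_gt1. Qed.

Lemma apow_v k : apow alpha (v 0 k) = p k.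
Proof. by rewrite /apow ger0_norm. Qed.

Lemma p_eq0 k : v 0 k = 0 -> p k = 0.
Proof. by rewrite /p => ->; rewrite powR0 // gt_eqF. Qed.

Lemma q_eq0 k : v 0 k = 0 -> q k = 0.
Proof. by rewrite /q => ->; rewrite powR0 // subr_eq0 gt_eqF. Qed.

Lemma mul_qv k : q k * v 0 k = p k.
Proof. by rewrite mulrC mulr_powRB1. Qed.

(* Otherwise [pi v = 0], and [v = pi v] contradicts [sum v = 1]. *)
Lemma H_neq0 : H != 0.
Proof.
apply/eqP => H0; move: v_sum1; rewrite big1 => [/eqP|k _].
  by rewrite eq_sym oner_eq0.
have := congr1 (fun w : 'rV_N => w 0 k) v_eq.
by rewrite /= FfunE -/H H0 invr0 mulr0 addr0 mxE => /eqP; rewrite oppr_eq0 => /eqP.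
Qed.

Lemma p_Apow l : p l * Apow A alpha v l = v 0 l * H.
Proof.
have := congr1 (fun w : 'rV_N => w 0 l) v_eq.
rewrite /= FfunE -/H apow_v mxE => /eqP; rewrite addrC subr_eq0 => /eqP <-.
by rewrite mulfVK // H_neq0.
Qed.

Lemma q_Apow l : q l * Apow A alpha v l = (v 0 l != 0)%:R * H.
Proof.
have [v0|vn0] := eqVneq (v 0 l) 0; first by rewrite q_eq0 // !mul0r.
by apply: (mulIf vn0); rewrite mul1r mulrAC mul_qv p_Apow mulrC.
Qed.

Lemma sum_q_Apow (x : 'rV_N) :
  \sum_(k < N) q k * Apow A alpha v k * x 0 k = H * supp_sum x.
Proof. by rewrite mulr_sumr; apply: eq_bigr => k _; rewrite q_Apow mulrCA mulrA. Qed.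

Lemma sum_p_U (x : 'rV_N) : \sum_(k < N) p k * U x k = H * supp_sum x.
Proof.
rewrite /U sum_mulmx_sym // -sum_q_Apow; apply: eq_bigr => j _.
have -> : \sum_(k < N) A j k * p k = Apow A alpha v j.
  by apply: eq_bigr => k _; rewrite apow_v.
by rewrite mulrAC.
Qed.

Lemma is_diff_apow_coord k :
  is_diff v (fun w => apow alpha (w 0 k)) (fun x => alpha * q k * x 0 k).
Proof.
have := is_diff_comp_derive (is_diff_coord v k) (is_derive_apow alpha_gt1 (v_ge0 k)).
by move/is_diff_eq; apply; apply: funext => x; rewrite mulrC.
Qed.

Lemma is_diff_Apow l : is_diff v (fun w => Apow A alpha w l) (fun x => alpha * U x l).
Proof.
have := is_diff_sum (fun j =>
  is_diffM_fun (is_diff_cst (A l j) v) (is_diff_apow_coord j)).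
move/is_diff_eq; apply; apply: funext => x /=; rewrite mulr_sumr.
by apply: eq_bigr => j _; rewrite mulr0 addr0; ring.
Qed.

Lemma is_diff_H : is_diff v (Hfun A alpha) (fun x => 2 * alpha * H * supp_sum x).
Proof.
have := is_diff_sum (fun k => is_diffM_fun (is_diff_apow_coord k) (is_diff_Apow k)).
have -> : (fun w : 'rV_N => \sum_(k < N) apow alpha (w 0 k) * Apow A alpha w k) =
    Hfun A alpha.
  by apply: funext => w; rewrite HfunE.
move/is_diff_eq; apply; apply: funext => x.
transitivity (alpha * \sum_(k < N) p k * U x k
    + alpha * \sum_(k < N) q k * Apow A alpha v k * x 0 k).
  rewrite big_split /= !mulr_sumr.
  by congr (_ + _); apply: eq_bigr => k _; rewrite ?apow_v; ring.
by rewrite sum_p_U sum_q_Apow; ring.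
Qed.

Let dF l (x : 'rV_N) := (alpha * (v 0 l != 0)%:R - 1) * x 0 l
  + alpha * (p l * U x l / H - 2 * v 0 l * supp_sum x).

Lemma is_diff_F_coord l : is_diff v (fun w => Ffun A alpha w 0 l) (dF l).
Proof.
have hpi := is_diffM_fun (is_diffM_fun (is_diff_apow_coord l) (is_diff_Apow l))
  (is_diffV_fun is_diff_H H_neq0).
have hF := is_diffD (is_diffN (is_diff_coord v l)) hpi.
have -> : (fun w => Ffun A alpha w 0 l) = - (fun w : 'rV_N => w 0 l) +
    (fun w => apow alpha (w 0 l) * Apow A alpha w l * (Hfun A alpha w)^-1).
  by apply: funext => w; rewrite FfunE.
apply: (is_diff_eq hF); apply: funext => x; rewrite !fctE apow_v -/H.
have H0 := H_neq0; rewrite /dF.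
transitivity (- x 0 l + alpha * (p l * U x l) / H
    + alpha * (q l * Apow A alpha v l) * x 0 l / H
    - 2 * alpha * (p l * Apow A alpha v l) * supp_sum x / H).
  by field.
by rewrite p_Apow q_Apow; field.
Qed.

Lemma is_diff_F : is_diff v (Ffun A alpha) (fun x => \row_l dF l x).
Proof. exact: is_diff_row is_diff_F_coord. Qed.

Lemma derive_F x :
  derivable (Ffun A alpha) v x /\ 'D_x (Ffun A alpha) v = \row_l dF l x.
Proof.
have [F_diff F_val] := is_diff_F; split; first exact: diff_derivable.
by rewrite deriveE // F_val.
Qed.

Lemma U_sub x y l : U (x - y) l = U x l - U y l.
Proof. by rewrite /U -sumrB; apply: eq_bigr => j _; rewrite !mxE; ring. Qed.

Lemma supp_sum_sub x y : supp_sum (x - y) = supp_sum x - supp_sum y.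
Proof. by rewrite /supp_sum -sumrB; apply: eq_bigr => j _; rewrite !mxE mulrBr. Qed.

Lemma U_ebase i l : U (ebase R i) l = A l i * q i.
Proof.
rewrite /U -(sum_mul_ebase (fun j => A l j * q j) i).
by apply: eq_bigr => j _; rewrite mulrA.
Qed.

Lemma supp_sum_ebase i : supp_sum (ebase R i) = (v 0 i != 0)%:R.
Proof. exact: sum_mul_ebase. Qed.

Lemma derive_F_supp i j : v 0 i != 0 -> v 0 j != 0 ->
  derivable (Ffun A alpha) v (ebase R i - ebase R j) /\
  'D_(ebase R i - ebase R j) (Ffun A alpha) v =
    (alpha - 1) *: (ebase R i - ebase R j) +
    alpha *: \sum_(l < N)
       ((v 0 l `^ alpha) *
          (A l i * v 0 i `^ (alpha - 1) - A l j * v 0 j `^ (alpha - 1))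
        / Hfun A alpha v) *: ebase R l.
Proof.
move=> vi vj; have [F_der ->] := derive_F (ebase R i - ebase R j); split => //.
apply/rowP => l; rewrite sum_scale_ebase [LHS]mxE /dF U_sub !U_ebase supp_sum_sub.
rewrite !supp_sum_ebase vi vj subrr mulr0 subr0 !mxE /=; congr (_ + _).
have [vl|] := eqVneq (v 0 l) 0; last by rewrite mulr1.
have off k : v 0 k != 0 -> (l == k) = false.
  by move=> vk; apply: contraNF vk => /eqP <-; rewrite vl.
by rewrite !off // subrr !mulr0.
Qed.

Lemma supp_sum_v : supp_sum v = 1.
Proof.
rewrite -v_sum1; apply: eq_bigr => k _.
by case: eqVneq => [->|]; rewrite ?mulr0 ?mul1r.
Qed.

Lemma U_v l : U v l = Apow A alpha v l.
Proof. by apply: eq_bigr => j _; rewrite mul_qv apow_v. Qed.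

Lemma derive_F_offsupp i : v 0 i = 0 ->
  derivable (Ffun A alpha) v (ebase R i - v) /\
  'D_(ebase R i - v) (Ffun A alpha) v = - (ebase R i - v).
Proof.
move=> vi; have [F_der ->] := derive_F (ebase R i - v); split => //.
apply/rowP => l; rewrite [LHS]mxE /dF U_sub U_ebase U_v supp_sum_sub supp_sum_ebase.
rewrite supp_sum_v q_eq0 // mulr0 sub0r mulrN p_Apow vi eqxx /= sub0r !mxE /=.
have H0 := H_neq0; have [vl|vl] := eqVneq (v 0 l) 0.
  by rewrite vl /=; field.
have -> : (l == i) = false by apply: contraNF vl => /eqP ->; rewrite vi.
by rewrite /=; field.
Qed.

(* Any positive weight works off the support, where [dF] is [-id]. *)
Let wt k := if v 0 k == 0 then 1 else (v 0 k)^-1.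

Lemma wt_gt0 k : 0 < wt k.
Proof.
rewrite /wt; case: eqVneq => [_|vk]; first exact: ltr01.
by rewrite invr_gt0 lt_def vk v_ge0.
Qed.

Lemma wt_dF k (a b : 'rV_N) : wt k * a 0 k * dF k b =
  (if v 0 k == 0 then -1 else (alpha - 1) / v 0 k) * (a 0 k * b 0 k)
  - 2 * alpha * ((v 0 k != 0)%:R * a 0 k) * supp_sum b
  + alpha / H * (q k * a 0 k * U b k).
Proof.
rewrite /wt /dF; have H0 := H_neq0; case: eqVneq => [vk|vk] /=.
  by rewrite p_eq0 // q_eq0 // vk; ring.
by rewrite -mul_qv; field; rewrite H0.
Qed.

Lemma sum_wt_dF (a b : 'rV_N) : \sum_(k < N) wt k * a 0 k * dF k b =
  \sum_(k < N) (if v 0 k == 0 then -1 else (alpha - 1) / v 0 k) * (a 0 k * b 0 k)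
  - 2 * alpha * supp_sum a * supp_sum b
  + alpha / H * \sum_(k < N) q k * a 0 k * U b k.
Proof.
rewrite (eq_bigr _ (fun k _ => wt_dF k a b)) big_split sumrB /= -mulr_sumr.
by rewrite -mulr_suml -mulr_sumr.
Qed.

Lemma dF_selfadjoint (a b : 'rV_N) :
  \sum_(k < N) wt k * a 0 k * dF k b = \sum_(k < N) wt k * b 0 k * dF k a.
Proof.
rewrite !sum_wt_dF; congr (_ - _ + _).
- by apply: eq_bigr => k _; rewrite [a 0 k * _]mulrC.
- by rewrite mulrAC.
congr (_ * _).
exact: (sum_mulmx_sym (fun k => q k * a 0 k) (fun j => q j * b 0 j) A_sym).
Qed.

Lemma eigenvalue_dF_real lam :
  eigenvalue_T0 (linmx ('d (Ffun A alpha) v)) lam -> complex.Im lam = 0.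
Proof.
move=> [z [z_neq0 _ zM]]; have [F_diff F_val] := is_diff_F.
have [] := eigenvector_ReIm zM; rewrite !mul_rV_linmx F_val.
set a := map_mx _ z; set b := map_mx _ z => aM bM.
have dFa k : dF k a = complex.Re lam * a 0 k - complex.Im lam * b 0 k.
  by have := congr1 (fun y : 'rV_N => y 0 k) aM; rewrite /= !mxE.
have dFb k : dF k b = complex.Im lam * a 0 k + complex.Re lam * b 0 k.
  by have := congr1 (fun y : 'rV_N => y 0 k) bM; rewrite /= !mxE.
apply: (@selfadjoint_rotation_eq0 _ _ wt (fun k => a 0 k) (fun k => b 0 k)
  (complex.Re lam)).
- exact: wt_gt0.
- by have [k ?] := ReIm_neq0 z_neq0; exists k; rewrite !mxE.
- have := dF_selfadjoint a b.
  by under eq_bigr do rewrite dFb; under [in RHS]eq_bigr do rewrite dFa.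
Qed.

End equilibrium.

Theorem lemma3p7 (R : realType) (N : nat) (alpha : R) (A : 'M[R]_N)
  (v : 'rV[R]_N) :
  (2 <= N)%N -> 1 < alpha ->
  A^T = A ->
  (forall i j, 0 <= A i j) ->
  (forall i j, i != j -> 0 < A i j) ->
  (exists c : R, forall i, \sum_(j < N) A i j = c) ->
  inDelta A v ->
  Ffun A alpha v = 0 ->
  [/\ (forall i j : 'I_N, v 0 i != 0 -> v 0 j != 0 ->
        derivable (Ffun A alpha) v (ebase R i - ebase R j) /\
        'D_(ebase R i - ebase R j) (Ffun A alpha) v =
          (alpha - 1) *: (ebase R i - ebase R j) +
          alpha *: \sum_(l < N)
             ((v 0 l `^ alpha) *
                (A l i * v 0 i `^ (alpha - 1) - A l j * v 0 j `^ (alpha - 1))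
              / Hfun A alpha v) *: ebase R l),
      (forall i : 'I_N, v 0 i = 0 ->
        derivable (Ffun A alpha) v (ebase R i - v) /\
        'D_(ebase R i - v) (Ffun A alpha) v = - (ebase R i - v)),
      differentiable (Ffun A alpha) v &
      (forall lam : R[i], eigenvalue_T0 (linmx ('d (Ffun A alpha) v)) lam ->
        complex.Im lam = 0)].
Proof.
move=> _ alpha_gt1 A_sym _ _ _ [v_ge0 v_sum1 _] v_eq; split.
- by move=> i j vi vj; apply: derive_F_supp.
- by move=> i vi; apply: derive_F_offsupp.
- by have [] := is_diff_F alpha_gt1 A_sym v_ge0 v_sum1 v_eq.
- by move=> lam; apply: eigenvalue_dF_real.
Qed.
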